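(* Let $1\le t\le k$, $d\ge k+1$ and $0<\beta\le1/2$. Let $X\in\mathbb{R}^{t\times t}$ be a symmetric matrix and $Z\in\mathbb{R}^t$ a vector with $|X_{ij}|\le\frac{\beta}{t+1}$ for all $i,j\in[t]$ and $|Z_i|\le\frac{\beta}{t+1}$ for all $i\in[t]$. Then there exist $y_1,\dots,y_t\in[-1,1]^d$ such that $X_{ij}=\langle y_i,y_j\rangle$ for $i\ne j$, $X_{ii}=\langle y_i,y_i\rangle-\beta$, and $Z_i=\langle y_i,\mathbf 1\rangle$ for all $i,j\in[t]$, where $\mathbf 1=(1,\dots,1)\in\mathbb{R}^d$. *)

From mathcomp Require Import all_boot all_order all_algebra.
From mathcomp Require Import reals.
Set Implicit Arguments. Unset Strict Implicit. Unset Printing Implicit Defensive.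
Import Order.TTheory GRing.Theory Num.Theory.
Local Open Scope ring_scope.

Definition dotv (R : realType) (d : nat) (u v : 'rV[R]_d) : R :=
  \sum_(l < d) u 0 l * v 0 l.

Definition onesv (R : realType) (d : nat) : 'rV[R]_d := const_mx 1.

(* With z := Z and e := beta / (t+1), the matrix A := X + beta I - z z^T / d is positive
   definite: the shift beta = (t+1) e dominates both |v X v^T| <= t e |v|^2 and
   (v z)^2 <= t e^2 |v|^2.  A Cholesky factor V of A has t <= d - 1 columns, so the rows of
   W := [z / sqrt d | V] have Gram matrix X + beta I, and W e_0 = z / sqrt d.  Composing with a
   Householder reflection H that maps the all-ones vector to sqrt d e_0 keeps the Gram matrix
   and gives y_i := (W H)_i with <y_i, 1> = Z_i.  Finally y_il^2 <= |y_i|^2 = X_ii + beta <= 1. *)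

From mathcomp Require Import all_boot all_order all_algebra.
From mathcomp Require Import reals ring lra.
Set Implicit Arguments. Unset Strict Implicit. Unset Printing Implicit Defensive.
Import Order.TTheory GRing.Theory Num.Theory.
Local Open Scope ring_scope.

Section GramFactorization.
Variable R : rcfType.

Definition posdef n (A : 'M[R]_n) :=
  forall v : 'rV[R]_n, v != 0 -> 0 < (v *m A *m v^T) 0 0.

Lemma mul_row_tr_sqr n (v : 'rV[R]_n) : (v *m v^T) 0 0 = \sum_i v 0 i ^+ 2.
Proof. by rewrite mxE; apply: eq_bigr => i _; rewrite mxE expr2. Qed.

Lemma mul_row_tr_gt0 n (v : 'rV[R]_n) : v != 0 -> 0 < (v *m v^T) 0 0.
Proof.
move=> v0; rewrite mul_row_tr_sqr lt_def sumr_ge0 ?andbT => [|i _]; last first.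
  exact: sqr_ge0.
apply: contra v0 => /eqP/psumr_eq0P v2_0; apply/eqP/rowP => i.
by apply/eqP; rewrite mxE -sqrf_eq0 v2_0 // => l _; apply: sqr_ge0.
Qed.

Lemma row_entry_sqr_le m n (Y : 'M[R]_(m, n)) i l : Y i l ^+ 2 <= (Y *m Y^T) i i.
Proof.
rewrite mxE (bigD1 l) //= mxE -expr2 lerDl.
by apply: sumr_ge0 => j _; rewrite mxE -expr2 sqr_ge0.
Qed.

Lemma posdef_block_ul n a (r : 'rV[R]_n) c D :
  posdef (block_mx (a%:M : 'M_1) r c D) -> 0 < a.
Proof.
move=> /(_ (row_mx 1 0)); rewrite mul_row_block tr_row_mx mul_row_col.
rewrite !mul0mx !addr0 mul1mx trmx1 mulmx1 trmx0 mulmx0 addr0 mxE eqxx mulr1n.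
by apply; rewrite row_mx_eq0 negb_and oner_neq0.
Qed.

(* Test the form on [row_mx (- a^-1 x c) x], which kills the first block row. *)
Lemma posdef_schur n a (r : 'rV[R]_n) c D :
  posdef (block_mx (a%:M : 'M_1) r c D) -> posdef (D - a^-1 *: (c *m r)).
Proof.
move=> pA x x0; have a0 := posdef_block_ul pA.
have := pA (row_mx (- a^-1 *: (x *m c)) x).
rewrite mul_row_block tr_row_mx mul_row_col mul_mx_scalar scalerA mulrN.
rewrite mulfV ?gt_eqF // scaleN1r addNr mul0mx add0r.
have -> : - a^-1 *: (x *m c) *m r + x *m D = x *m (D - a^-1 *: (c *m r)).
  by rewrite mulmxBr -scalemxAl -scalemxAr mulmxA scaleNr addrC.
by apply; rewrite row_mx_eq0 negb_and x0 orbT.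
Qed.

Lemma cholesky n p (A : 'M[R]_n) : (n <= p)%N -> A^T = A -> posdef A ->
  exists V : 'M[R]_(n, p), V *m V^T = A.
Proof.
elim: n p A => [|n IH] p A np.
  by exists 0; apply/matrixP => -[].
case: p np => [//|q] np; move: A; rewrite -[n.+1]/(1 + n)%N -[q.+1]/(1 + q)%N => A.
rewrite -[A]submxK [ulsubmx A]mx11_scalar.
move: (ulsubmx A 0 0) (ursubmx A) (dlsubmx A) (drsubmx A) => {A} a r c D.
rewrite tr_block_mx tr_scalar_mx => /eq_block_mx [_ rc cr sD] pA.
have a0 := posdef_block_ul pA.
have [|V hV] := IH q _ np _ (posdef_schur pA).
  by rewrite linearB linearZ /= trmx_mul cr rc sD.
set s := Num.sqrt a; have s0 : s != 0 by rewrite gt_eqF // sqrtr_gt0.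
exists (block_mx (s%:M : 'M_1) 0 (s^-1 *: c) V).
rewrite tr_block_mx mulmx_block !trmx0 !mulmx0 !mul0mx !addr0 hV.
rewrite tr_scalar_mx -scalar_mxM -expr2 sqr_sqrtr ?ltW //.
rewrite mul_scalar_mx linearZ /= scalerA mulfV // scale1r rc.
rewrite mul_mx_scalar scalerA mulfV // scale1r.
rewrite -scalemxAl -scalemxAr scalerA -invfM -expr2 sqr_sqrtr ?ltW //.
by rewrite addrC subrK.
Qed.

Lemma normrM3_le_amgm (a m b e : R) : `|m| <= e ->
  `|a * m * b| <= e / 2 * (a ^+ 2 + b ^+ 2).
Proof.
move=> hm; rewrite !normrM -(real_normK (num_real a)) -(real_normK (num_real b)).
have ha := normr_ge0 a; have hb := normr_ge0 b; have hm0 := normr_ge0 m.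
set A := `|a| in ha *; set B := `|b| in hb *; set M := `|m| in hm hm0 *.
have h1 : 0 <= A * B * (e - M) by rewrite mulr_ge0 ?mulr_ge0 ?subr_ge0.
have h2 : 0 <= (A - B) ^+ 2 by apply: sqr_ge0.
nra.
Qed.

Lemma quad_form_bound n (M : 'M[R]_n) (v : 'rV[R]_n) e :
  (forall i j, `|M i j| <= e) ->
  `|(v *m M *m v^T) 0 0| <= e * n%:R * (v *m v^T) 0 0.
Proof.
move=> hM; have -> : (v *m M *m v^T) 0 0 = \sum_i \sum_j v 0 i * M i j * v 0 j.
  rewrite mxE exchange_big /=; apply: eq_bigr => j _.
  by rewrite !mxE mulr_suml; apply: eq_bigr => i _.
apply: le_trans (ler_norm_sum _ _ _) _.
apply: le_trans (ler_sum _ (fun i _ => ler_norm_sum _ _ _)) _.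
apply: le_trans (ler_sum _ (fun i _ =>
  ler_sum _ (fun j _ => normrM3_le_amgm (v 0 i) (v 0 j) (hM i j)))) _.
rewrite mul_row_tr_sqr le_eqVlt; apply/orP; left; apply/eqP.
under eq_bigr do rewrite -mulr_sumr big_split /= sumr_const card_ord.
rewrite -mulr_sumr big_split /= sumr_const card_ord sumrMnl -mulr_natr.
by field.
Qed.

Lemma posdef_shift n (X : 'M[R]_n) (z : 'cV[R]_n) (e b c : R) :
  (forall i j, `|X i j| <= e) -> (forall i, `|z i 0| <= e) -> 0 <= c ->
  e * n%:R * (1 + c * e) < b -> posdef (X + b%:M - c *: (z *m z^T)).
Proof.
move=> hX hz c0 hb v v0.
rewrite mulmxBr mulmxDr !mulmxBl !mulmxDl mul_mx_scalar -!scalemxAl -!scalemxAr.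
rewrite -scalemxAl [(_ - _ : 'M[R]_1) 0 0]mxE [(- _ : 'M[R]_1) 0 0]mxE.
rewrite [(_ + _ : 'M[R]_1) 0 0]mxE [(b *: _ : 'M[R]_1) 0 0]mxE [(c *: _ : 'M[R]_1) 0 0]mxE.
have Q0 := mul_row_tr_gt0 v0; set Q := (v *m v^T) 0 0 in Q0 *.
have := quad_form_bound v hX; rewrite ler_norml => /andP [qX _].
have /(quad_form_bound v) : forall i j, `|(z *m z^T) i j| <= e * e.
  by move=> i j; rewrite !mxE big_ord1 !mxE normrM ler_pM.
rewrite ler_norml => /andP [_ /(ler_wpM2l c0) qZ].
have : 0 < Q * (b - e * n%:R * (1 + c * e)) by rewrite mulr_gt0 // subr_gt0.
move: qX qZ; rewrite -/Q; set qx := (v *m X *m v^T) 0 0.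
set qz := (v *m (z *m z^T) *m v^T) 0 0.
nra.
Qed.

(* Householder reflection in the hyperplane orthogonal to [a - b]. *)
Lemma reflection_exists n (a b : 'cV[R]_n) : a^T *m a = b^T *m b ->
  exists H : 'M[R]_n, H *m H^T = 1%:M /\ H *m a = b.
Proof.
move=> hab; have [<-|ab] := eqVneq a b; first by exists 1%:M; rewrite trmx1 !mul1mx.
set w := a - b; set q := (w^T *m w) 0 0; set c := 2 / q.
have q0 : 0 < q by rewrite /q -{2}[w]trmxK mul_row_tr_gt0 // trmx_eq0 subr_eq0.
have wwE : w^T *m w = q%:M by apply: mx11_scalar.
have waE : w^T *m a = (q / 2)%:M.
  have ww2 : w^T *m w = 2%:R *: (w^T *m a).
    rewrite /w !linearB /= !(mulmxBl, mulmxBr) -hab.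
    have -> : a^T *m b = b^T *m a.
      by apply/matrixP => i j; rewrite !ord1 !mxE; apply: eq_bigr => l _; rewrite !mxE mulrC.
    apply/matrixP => i j; rewrite !mxE; ring.
  have := congr1 (fun M : 'M[R]_1 => M 0 0) ww2; rewrite /= [(_ *: _ : 'M[R]_1) 0 0]mxE -/q => ->.
  by rewrite [LHS]mx11_scalar mulrC mulKf ?pnatr_eq0.
set H := 1%:M - c *: (w *m w^T).
have HT : H^T = H.
  by apply/matrixP => i j; rewrite !mxE eq_sym !big_ord1 !mxE [X in c * X]mulrC.
exists H; split.
  rewrite HT /H mulmxBl !mulmxBr mul1mx mulmx1 -!scalemxAl -!scalemxAr scalerA.
  rewrite !mulmxA -[w *m w^T *m w]mulmxA wwE mul_mx_scalar -scalemxAl scalerA.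
  have -> : c * c * q = c + c by rewrite /c; field; rewrite gt_eqF.
  by rewrite scalerDl opprB addrK mul1mx subrK.
rewrite mulmxBl mul1mx -scalemxAl -mulmxA waE mul_mx_scalar scalerA.
have -> : c * (q / 2) = 1 by rewrite /c; field; rewrite gt_eqF.
by rewrite scale1r /w opprB addrC subrK.
Qed.

Lemma gram_factor_with_ones t d (A : 'M[R]_t) (z : 'cV[R]_t) :
  (t <= d)%N -> A^T = A -> posdef A ->
  exists Y : 'M[R]_(t, d.+1),
    Y *m Y^T = A + d.+1%:R^-1 *: (z *m z^T) /\ Y *m const_mx 1 = z.
Proof.
move=> td hA pA; have [V hV] := cholesky td hA pA.
set s := Num.sqrt (d.+1%:R : R).
have s0 : 0 < s by rewrite sqrtr_gt0 ltr0n.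
have ss : s ^+ 2 = d.+1%:R by rewrite sqr_sqrtr // ler0n.
set e0 : 'cV[R]_(d.+1) := delta_mx 0 0.
have [H [hH hH1]] : exists H : 'M[R]_(d.+1),
    H *m H^T = 1%:M /\ H *m const_mx 1 = s *: e0.
  apply: reflection_exists; apply/matrixP => i j; rewrite !ord1 !mxE.
  rewrite [in RHS](bigD1 0) //= [X in _ = _ + X]big1 => [|l l0]; last first.
    by rewrite !mxE (negbTE l0) mulr0 mul0r.
  under eq_bigr do rewrite !mxE mulr1.
  by rewrite sumr_const card_ord !mxE eqxx mulr1 addr0 -expr2 ss.
set W : 'M[R]_(t, 1 + d) := row_mx (s^-1 *: z) V.
exists (W *m H); split.
  rewrite trmx_mul mulmxA -[W *m H *m H^T]mulmxA hH mulmx1.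
  rewrite tr_row_mx mul_row_col hV linearZ /= -scalemxAl -scalemxAr scalerA.
  by rewrite -invfM -expr2 ss addrC.
rewrite -mulmxA hH1 -scalemxAr -colE; apply/colP => i; rewrite !mxE.
by rewrite split1 unlift_none /= mxE mulrA mulfV ?gt_eqF // mul1r.
Qed.

Lemma gram_realization t d (X : 'M[R]_t) (z : 'cV[R]_t) (e : R) :
  (t <= d)%N -> X^T = X -> 0 < e -> e * t.+1%:R <= 1 / 2 ->
  (forall i j, `|X i j| <= e) -> (forall i, `|z i 0| <= e) ->
  exists Y : 'M[R]_(t, d.+1),
    Y *m Y^T = X + (e * t.+1%:R)%:M /\ Y *m const_mx 1 = z.
Proof.
move=> td Xs e0 e_small hX hz.
pose c := (d.+1%:R : R)^-1; set A := X + (e * t.+1%:R)%:M - c *: (z *m z^T).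
have c0 : 0 <= c by rewrite invr_ge0 ler0n.
have c1 : c <= 1 by rewrite invf_le1 ?ler1n ?ltr0n.
have hA : A^T = A.
  apply/matrixP => i j; rewrite !mxE !big_ord1 !mxE eq_sym [z j 0 * _]mulrC.
  by rewrite -{1}Xs mxE.
have pA : posdef A.
  apply: posdef_shift hX hz c0 _; move: e_small; rewrite -natr1 mulrDr mulr1 => e_small.
  have cet : c * (e * t%:R) <= e * t%:R by rewrite ler_piMl // mulr_ge0 ?ler0n ?ltW.
  nra.
have [Y [hYY hY1]] := gram_factor_with_ones z td hA pA.
by exists Y; rewrite hYY subrK.
Qed.

End GramFactorization.

Theorem mainTheorem10 (R : realType) (t k d : nat) (beta : R)
  (X : 'M[R]_t) (Z : 'I_t -> R) :
  (1 <= t)%N -> (t <= k)%N -> (k.+1 <= d)%N ->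
  0 < beta -> beta <= 1 / 2 ->
  X^T = X ->
  (forall i j : 'I_t, `|X i j| <= beta / t.+1%:R) ->
  (forall i : 'I_t, `|Z i| <= beta / t.+1%:R) ->
  exists y : 'I_t -> 'rV[R]_d,
    (forall i : 'I_t, forall l : 'I_d, -1 <= y i 0 l <= 1) /\
    (forall i j : 'I_t, i != j -> X i j = dotv (y i) (y j)) /\
    (forall i : 'I_t, X i i = dotv (y i) (y i) - beta) /\
    (forall i : 'I_t, Z i = dotv (y i) (onesv R d)).
Proof.
move=> _ tk kd b0 b12 Xs hX hZ.
case: d kd => [//|d] kd.
set e := beta / t.+1%:R in hX hZ.
have e0 : 0 < e by rewrite divr_gt0 ?ltr0n.
have beE : beta = e * t.+1%:R by rewrite mulfVK ?pnatr_eq0.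
have eb : e <= beta by rewrite beE ler_peMr ?ler1n // ltW.
have e_small : e * t.+1%:R <= 1 / 2 by rewrite -beE.
have hz i : `|(\col_i Z i) i 0| <= e by rewrite mxE.
have [Y [hYY hY1]] := gram_realization (leq_trans tk kd) Xs e0 e_small hX hz.
rewrite -beE in hYY.
have dotYE i j : dotv (row i Y) (row j Y) = X i j + beta *+ (i == j).
  have -> : X i j + beta *+ (i == j) = (Y *m Y^T) i j by rewrite hYY !mxE.
  by rewrite mxE; apply: eq_bigr => l _; rewrite !mxE.
exists (fun i => row i Y); split; [|split; [|split]].
- move=> i l; rewrite mxE -ler_norml -(expr_le1 (n := 2)) // real_normK ?num_real //.
  apply: le_trans (row_entry_sqr_le Y i l) _; rewrite hYY !mxE eqxx mulr1n.
  by have := hX i i; rewrite ler_norml => /andP [_]; lra.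
- by move=> i j ij; rewrite dotYE (negbTE ij) addr0.
- by move=> i; rewrite dotYE eqxx addrK.
- move=> i; have := congr1 (fun M : 'cV[R]_t => M i 0) hY1; rewrite !mxE => <-.
  by apply: eq_bigr => l _; rewrite !mxE.
Qed.
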